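(* Let $\xi\ge 1$ be a real constant, let $e_b>0$, and let $\mathcal A\subseteq[0,e_b]$ be the range of admissible values of a parameter $a$. For $a\in\mathcal A$ consider the initial triple $(p_X,p_Y,p_Z)=(e_b-a,\;a,\;\xi e_b-a)$. Fix a finite sequence of B steps and P steps whose first step is a B step, and let $(p_X',p_Y',p_Z')$ be the triple obtained by applying this sequence to the initial triple. Define the key generation rate $$R(a)=1-H_2(p_X'+p_Y')-H_2(p_Z'+p_Y').$$ Suppose (i) $e_b<\frac{1+4a}{2(1+\xi)}$ for all $a\in\mathcal A$, and (ii) $e_b<\frac{1}{2\xi}$. Then, for fixed $e_b$ and fixed sequence, $R(a)$ is an increasing function of $a$ on $\mathcal A$.
   Context: $H_2(p)=-p\log_2 p-(1-p)\log_2(1-p)$ is the binary entropy. A B step maps a triple $(p_X,p_Y,p_Z)$ to $(p_X',p_Y',p_Z')$ with $p_X'=(p_X^2+p_Y^2)/p_S$, $p_Y'=2p_Xp_Y/p_S$, $p_Z'=2(1-p_X-p_Y-p_Z)p_Z/p_S$, where $p_S=1-2(p_X+p_Y)(1-p_X-p_Y)$. A P step maps $(p_X,p_Y,p_Z)$, with $p_I=1-p_X-p_Y-p_Z$, to $p_X'=3p_I^2(p_X+p_Y)+6p_Ip_Xp_Z+3p_X^2p_Y+p_X^3$, $p_Y'=6p_Ip_Yp_Z+3p_X(p_Y^2+p_Z^2)+3p_Yp_Z^2+p_Y^3$, $p_Z'=3p_I(p_Y^2+p_Z^2)+6p_Xp_Yp_Z+3p_Y^2p_Z+p_Z^3$.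 (Here $p_X,p_Y,p_Z$ are the probabilities of bit-flip, bit-and-phase-flip, and phase-flip errors of noisy EPR pairs.) *)

From Stdlib Require Import Reals List.
Open Scope R_scope.

Definition log2 (x : R) : R := ln x / ln 2.

(* binary entropy H_2(p) = -p log2 p - (1-p) log2 (1-p).
   (Stdlib's ln is 0 at 0, so 0 * log2 0 = 0, matching the usual convention.) *)
Definition H2 (p : R) : R := - p * log2 p - (1 - p) * log2 (1 - p).

Record triple := mkTriple { pX : R; pY : R; pZ : R }.

Definition B_step (t : triple) : triple :=
  let x := pX t in let y := pY t in let z := pZ t in
  let pS := 1 - 2 * (x + y) * (1 - x - y) in
  mkTriple ((x ^ 2 + y ^ 2) / pS)
           (2 * x * y / pS)
           (2 * (1 - x - y - z) * z / pS).

Definition P_step (t : triple) : triple :=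
  let x := pX t in let y := pY t in let z := pZ t in
  let pI := 1 - x - y - z in
  mkTriple (3 * pI ^ 2 * (x + y) + 6 * pI * x * z + 3 * x ^ 2 * y + x ^ 3)
           (6 * pI * y * z + 3 * x * (y ^ 2 + z ^ 2) + 3 * y * z ^ 2 + y ^ 3)
           (3 * pI * (y ^ 2 + z ^ 2) + 6 * x * y * z + 3 * y ^ 2 * z + z ^ 3).

Inductive step := StepB | StepP.

Definition apply_step (s : step) (t : triple) : triple :=
  match s with StepB => B_step t | StepP => P_step t end.

Definition apply_seq (l : list step) (t : triple) : triple :=
  fold_left (fun acc s => apply_step s acc) l t.

Definition init_triple (xi eb a : R) : triple := mkTriple (eb - a) a (xi * eb - a).

Definition key_rate (xi eb : R) (l : list step) (a : R) : R :=
  let t := apply_seq l (init_triple xi eb a) in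
  1 - H2 (pX t + pY t) - H2 (pZ t + pY t).

(** In the Pauli-channel eigenvalues [u = 1 - 2 (p_X + p_Y)],
    [v = 1 - 2 (p_Z + p_Y)], [w = 1 - 2 (p_X + p_Z)] a B step is
    [(u, v, w) |-> (2u, v^2 + w^2, 2vw) / (1 + u^2)] and a P step is
    [(u, v, w) |-> (u^3, (3v - v^3)/2, (3u^2 w - w^3)/2)].  Initially [u] and
    [v] do not depend on [a] while [w] increases with it.  Both maps keep [u]
    independent of [a] and, on the region [0 <= v, w <= 1], [vw <= u], are
    increasing in [v] and [w]; the first B step turns the increase of [w]
    into a strict increase of [v].  Hence the final bit error rate
    [(1 - u)/2] is constant while the phase error rate [(1 - v)/2 <= 1/2]
    strictly decreases, and [H2] is increasing on [[0, 1/2]]. *)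

From Stdlib Require Import Reals List Lra.
From Coquelicot Require Import Coquelicot.
Open Scope R_scope.

Lemma ln2_pos : 0 < ln 2.
Proof. pose proof ln_lt_2; lra. Qed.

Lemma H2_0 : H2 0 = 0.
Proof. unfold H2, log2. rewrite Rminus_0_r, ln_1. field. apply Rgt_not_eq, ln2_pos. Qed.

Lemma H2_pos q : 0 < q <= 1 / 2 -> 0 < H2 q.
Proof.
  intros Hq. pose proof ln2_pos as L2.
  assert (Lq : ln q < 0) by (rewrite <- ln_1; apply ln_increasing; lra).
  assert (Lq' : ln (1 - q) <= 0).
  { rewrite <- ln_1. destruct (Req_dec q (1 / 2)) as [->|Hne].
    - replace (1 - 1 / 2) with (/ 2) by field.
      left; apply ln_increasing; lra.
    - left; apply ln_increasing; lra. }
  assert (Hlq : 0 < - q * ln q) by nra.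
  assert (Hlq' : 0 <= - (1 - q) * ln (1 - q)) by nra.
  unfold H2, log2.
  replace (- q * (ln q / ln 2) - (1 - q) * (ln (1 - q) / ln 2))
    with ((- q * ln q + - (1 - q) * ln (1 - q)) / ln 2) by (field; lra).
  apply Rdiv_lt_0_compat; lra.
Qed.

Lemma H2_derivative p :
  0 < p < 1 -> derivable_pt_lim H2 p ((ln (1 - p) - ln p) / ln 2).
Proof.
  intros Hp. apply is_derive_Reals. pose proof ln2_pos.
  unfold H2, log2. auto_derive.
  - repeat split; lra.
  - replace (1 + - p) with (1 - p) by ring. field; lra.
Qed.

Lemma H2_lt p q : 0 <= p -> p < q -> q <= 1 / 2 -> H2 p < H2 q.
Proof.
  intros Hp Hpq Hq. destruct (Req_dec p 0) as [->|Hp0].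
  { rewrite H2_0. apply H2_pos. lra. }
  destruct (MVT_cor2 H2 (fun c => (ln (1 - c) - ln c) / ln 2) p q Hpq)
    as [c [Hdiff Hc]].
  { intros c Hc. apply H2_derivative. lra. }
  assert (Hslope : 0 < (ln (1 - c) - ln c) / ln 2).
  { apply Rdiv_lt_0_compat; [|exact ln2_pos].
    assert (ln c < ln (1 - c)) by (apply ln_increasing; lra). lra. }
  nra.
Qed.

Definition lamZ (t : triple) : R := 1 - 2 * (pX t + pY t).
Definition lamX (t : triple) : R := 1 - 2 * (pZ t + pY t).
Definition lamY (t : triple) : R := 1 - 2 * (pX t + pZ t).

Section B_step_eigenvalues.

Variable t : triple.

Let pS_pos : 0 < 1 - 2 * (pX t + pY t) * (1 - pX t - pY t).
Proof. pose proof (pow2_ge_0 (2 * (pX t + pY t) - 1)). nra. Qed.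

Let denom_pos : 0 < 1 + lamZ t ^ 2.
Proof. pose proof (pow2_ge_0 (lamZ t)). lra. Qed.

Lemma lamZ_B_step : lamZ (B_step t) = 2 * lamZ t / (1 + lamZ t ^ 2).
Proof. unfold lamZ in *; simpl. field; lra. Qed.

Lemma lamX_B_step :
  lamX (B_step t) = (lamX t ^ 2 + lamY t ^ 2) / (1 + lamZ t ^ 2).
Proof. unfold lamZ, lamX, lamY in *; simpl. field; lra. Qed.

Lemma lamY_B_step : lamY (B_step t) = 2 * lamX t * lamY t / (1 + lamZ t ^ 2).
Proof. unfold lamZ, lamX, lamY in *; simpl. field; lra. Qed.

End B_step_eigenvalues.

(** [cubic u w] is the P-step update of [lamY] when [lamZ = u]; [cubic 1] is
    that of [lamX] and [cubic u u = u^3] that of [lamZ]. *)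
Definition cubic (u w : R) : R := (3 * u ^ 2 * w - w ^ 3) / 2.

Lemma lamZ_P_step t : lamZ (P_step t) = lamZ t ^ 3.
Proof. destruct t; unfold lamZ, P_step; simpl. ring. Qed.

Lemma lamX_P_step t : lamX (P_step t) = cubic 1 (lamX t).
Proof. destruct t; unfold lamX, cubic, P_step; simpl. field. Qed.

Lemma lamY_P_step t : lamY (P_step t) = cubic (lamZ t) (lamY t).
Proof. destruct t; unfold lamZ, lamY, cubic, P_step; simpl. field. Qed.

Lemma cubic_ge0 u w : 0 <= w <= u -> 0 <= cubic u w.
Proof.
  intros Hw. unfold cubic.
  assert (0 <= w * (3 * u ^ 2 - w ^ 2)) by (apply Rmult_le_pos; nra).
  nra.
Qed.

Lemma cubic_le_cube u w : 0 <= w <= u -> cubic u w <= u ^ 3.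
Proof.
  intros Hw. unfold cubic.
  assert (0 <= (u - w) ^ 2 * (2 * u + w))
    by (apply Rmult_le_pos; [apply pow2_ge_0 | lra]).
  nra.
Qed.

Lemma cubic_lt u w1 w2 : 0 <= w1 -> w1 < w2 -> w2 <= u -> cubic u w1 < cubic u w2.
Proof.
  intros Hw1 Hw12 Hw2. unfold cubic.
  assert (w1 ^ 2 + w1 * w2 + w2 ^ 2 < 3 * u ^ 2) by nra.
  assert (0 < (w2 - w1) * (3 * u ^ 2 - (w1 ^ 2 + w1 * w2 + w2 ^ 2)))
    by (apply Rmult_lt_0_compat; lra).
  nra.
Qed.

Record lam_ordered (t1 t2 : triple) : Prop := {
  lamZ_eq : lamZ t1 = lamZ t2;
  lamZ_range : 0 < lamZ t1 <= 1;
  lamX_lt : 0 <= lamX t1 < lamX t2;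
  lamX_le1 : lamX t2 <= 1;
  lamY_lt : 0 <= lamY t1 < lamY t2;
  lamY_le_lamZ : lamY t2 <= lamZ t1 }.

(** Unlike [lam_ordered], this allows [lamX t1 = lamX t2], as for the
    initial triples. *)
Record B_ordered (t1 t2 : triple) : Prop := {
  B_lamZ_eq : lamZ t1 = lamZ t2;
  B_lamZ_pos : 0 < lamZ t1;
  B_lamX_le : 0 <= lamX t1 <= lamX t2;
  B_lamX_pos : 0 < lamX t2;
  B_lamX_le1 : lamX t2 <= 1;
  B_lamY_lt : 0 <= lamY t1 < lamY t2;
  B_lamY_le1 : lamY t2 <= 1;
  B_lamXY_le_lamZ : lamX t2 * lamY t2 <= lamZ t1 }.

Lemma lam_ordered_B_ordered t1 t2 : lam_ordered t1 t2 -> B_ordered t1 t2.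
Proof. intros []; split; nra. Qed.

Lemma B_step_ordered t1 t2 : B_ordered t1 t2 -> lam_ordered (B_step t1) (B_step t2).
Proof.
  intros [HZ HZpos [HX1 HX12] HX2 HX21 [HY1 HY12] HY21 HXY].
  split; rewrite ?lamZ_B_step, ?lamX_B_step, ?lamY_B_step, <- ?HZ; [reflexivity| | | | |];
    set (u := lamZ t1) in *; set (k := / (1 + u ^ 2));
    assert (Hk : 0 < k) by (apply Rinv_0_lt_compat; nra);
    assert (Hk1 : (1 + u ^ 2) * k = 1) by (apply Rinv_r; nra);
    unfold Rdiv; fold k; clear HZ.
  all: set (v1 := lamX t1) in *; set (v2 := lamX t2) in *;
       set (w1 := lamY t1) in *; set (w2 := lamY t2) in *.
  - split; [apply Rmult_lt_0_compat; lra|]. rewrite <- Hk1.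
    apply Rmult_le_compat_r; [lra|]. pose proof (pow2_ge_0 (u - 1)). lra.
  - split; [apply Rmult_le_pos; nra|].
    apply Rmult_lt_compat_r; [lra|]. nra.
  - rewrite <- Hk1. apply Rmult_le_compat_r; [lra|].
    assert (0 <= (1 - v2 ^ 2) * (1 - w2 ^ 2)) by (apply Rmult_le_pos; nra).
    assert ((v2 * w2) ^ 2 <= u ^ 2) by (apply pow_incr; split; nra).
    nra.
  - split; [apply Rmult_le_pos; nra|].
    apply Rmult_lt_compat_r; [lra|].
    assert (v1 * w1 <= v2 * w1) by (apply Rmult_le_compat_r; lra).
    assert (v2 * w1 < v2 * w2) by (apply Rmult_lt_compat_l; lra).
    lra.
  - apply Rmult_le_compat_r; lra.
Qed.

Lemma P_step_ordered t1 t2 : lam_ordered t1 t2 -> lam_ordered (P_step t1) (P_step t2).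
Proof.
  intros [HZ HZr [HX1 HX12] HX2 [HY1 HY12] HY2].
  assert (Hcubic1 : cubic 1 (lamX t2) <= 1).
  { pose proof (cubic_le_cube 1 (lamX t2)) as Hc. rewrite pow1 in Hc. apply Hc; lra. }
  assert (Hcube : lamZ t1 ^ 3 <= 1).
  { pose proof (pow_incr (lamZ t1) 1 3) as Hp. rewrite pow1 in Hp. apply Hp; lra. }
  split; rewrite ?lamZ_P_step, ?lamX_P_step, ?lamY_P_step, <- ?HZ.
  - reflexivity.
  - split; [apply pow_lt; lra | exact Hcube].
  - split; [apply cubic_ge0 | apply cubic_lt]; lra.
  - exact Hcubic1.
  - split; [apply cubic_ge0 | apply cubic_lt]; lra.
  - apply cubic_le_cube; lra.
Qed.

Lemma apply_step_ordered s t1 t2 :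
  lam_ordered t1 t2 -> lam_ordered (apply_step s t1) (apply_step s t2).
Proof.
  destruct s; simpl; intros H.
  - apply B_step_ordered, lam_ordered_B_ordered, H.
  - apply P_step_ordered, H.
Qed.

Lemma apply_seq_ordered l : forall t1 t2,
  lam_ordered t1 t2 -> lam_ordered (apply_seq l t1) (apply_seq l t2).
Proof.
  induction l as [|s l IH]; intros t1 t2 H; simpl; [exact H|].
  apply IH, apply_step_ordered, H.
Qed.

Definition rate (t : triple) : R := 1 - H2 (pX t + pY t) - H2 (pZ t + pY t).

Lemma rate_lt t1 t2 : lam_ordered t1 t2 -> rate t1 < rate t2.
Proof.
  intros [HZ _ [HX1 HX12] HX2 _ _]. unfold rate, lamZ, lamX in *.
  assert (Hbit : pX t1 + pY t1 = pX t2 + pY t2) by lra.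
  assert (H2 (pZ t2 + pY t2) < H2 (pZ t1 + pY t1)) by (apply H2_lt; lra).
  rewrite Hbit. lra.
Qed.

(** Hypotheses (ii) and (i) of the theorem say that [lamX] and [lamY] of the
    initial triple are positive. *)
Lemma init_B_ordered xi eb a1 a2 :
  1 <= xi -> 0 < eb -> eb < 1 / (2 * xi) ->
  eb < (1 + 4 * a1) / (2 * (1 + xi)) -> a1 < a2 -> a2 <= eb ->
  B_ordered (init_triple xi eb a1) (init_triple xi eb a2).
Proof.
  intros Hxi Heb Hii Hi Ha12 Ha2.
  assert (HX : 0 < 1 - 2 * xi * eb).
  { apply (Rmult_lt_compat_r (2 * xi)) in Hii; [|lra].
    unfold Rdiv in Hii. rewrite Rmult_assoc, Rinv_l in Hii; lra. }
  assert (HY : 0 < 1 - 2 * (1 + xi) * eb + 4 * a1).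
  { apply (Rmult_lt_compat_r (2 * (1 + xi))) in Hi; [|lra].
    unfold Rdiv in Hi. rewrite Rmult_assoc, Rinv_l in Hi; lra. }
  assert (HY2 : 1 - 2 * (1 + xi) * eb + 4 * a2 <= 1) by nra.
  unfold init_triple; split; unfold lamZ, lamX, lamY; simpl; nra.
Qed.

Theorem theorem3 (xi eb : R) (A : R -> Prop) (rest : list step) :
  1 <= xi ->
  0 < eb ->
  (forall a, A a -> 0 <= a <= eb) ->
  (forall a, A a -> eb < (1 + 4 * a) / (2 * (1 + xi))) ->
  eb < 1 / (2 * xi) ->
  forall a1 a2, A a1 -> A a2 -> a1 < a2 ->
    key_rate xi eb (StepB :: rest) a1 < key_rate xi eb (StepB :: rest) a2.
Proof.
  intros Hxi Heb Hrange Hi Hii a1 a2 HA1 HA2 Ha12.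
  change (rate (apply_seq rest (B_step (init_triple xi eb a1)))
          < rate (apply_seq rest (B_step (init_triple xi eb a2)))).
  apply rate_lt, apply_seq_ordered, B_step_ordered.
  apply init_B_ordered; try assumption.
  - apply Hi, HA1.
  - apply Hrange, HA2.
Qed.
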